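(* Let $A$ and $B$ be disjoint cubic graphs with $v(A)\equiv 2\pmod 6$ and $v(B)\equiv 2\pmod 6$, let $a=a_1a_2\in E(A)$ and $b=b_1b_2\in E(B)$, and let $G=Aa|bB$ with middle edge $z=z_1z_2$. Then $v(G)\equiv 0\pmod 6$ and $G$ has no $\Lambda$-factor containing the edge $z$.
   Context: Graphs are finite, undirected, without loops or multiple edges; $v(G)=|V(G)|$. For disjoint graphs $A,B$ with $a=a_1a_2\in E(A)$, $b=b_1b_2\in E(B)$, $AabB$ is obtained from $(A-a)\cup(B-b)$ (edge deletions) by adding the edges $a_1b_1,a_2b_2$; $Aa|bB$ is obtained from $AabB$ by replacing each edge $a_ib_i$ ($i=1,2$) by a path $a_iz_ib_i$ through a new vertex $z_i$ and adding the new edge $z=z_1z_2$, the middle edge. A $\Lambda$-factor of a graph is a spanning subgraph each of whose components is a path on 3 vertices. *)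

From mathcomp Require Import all_boot.
Set Implicit Arguments. Unset Strict Implicit. Unset Printing Implicit Defensive.

Definition simple_graph (T : finType) (e : rel T) : Prop :=
  symmetric e /\ irreflexive e.

Definition cubic (T : finType) (e : rel T) : Prop :=
  forall x : T, #|[set y | e x y]| = 3.

(* Vertices of A a|b B: the vertices of A, of B, and two new vertices
   z1 = inr false, z2 = inr true. *)
Notation split_vertex TA TB := ((TA + TB) + bool)%type.

Definition same_edge (T : eqType) (x y u v : T) : bool :=
  ((x == u) && (y == v)) || ((x == v) && (y == u)).

Definition to_mid (T : eqType) (u1 u2 : T) (x : T) (z : bool) : bool :=
  ((x == u1) && ~~ z) || ((x == u2) && z).

(* The graph A a|b B (A - a) U (B - b) plus paths a1 z1 b1, a2 z2 b2 and
   the middle edge z1 z2. *)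
Definition split_join (TA TB : finType) (eA : rel TA) (eB : rel TB)
  (a1 a2 : TA) (b1 b2 : TB) : rel (split_vertex TA TB) :=
  fun p q =>
    match p, q with
    | inl (inl x), inl (inl y) => eA x y && ~~ same_edge x y a1 a2
    | inl (inr x), inl (inr y) => eB x y && ~~ same_edge x y b1 b2
    | inl (inl _), inl (inr _) => false
    | inl (inr _), inl (inl _) => false
    | inl (inl x), inr z => to_mid a1 a2 x z
    | inr z, inl (inl x) => to_mid a1 a2 x z
    | inl (inr x), inr z => to_mid b1 b2 x z
    | inr z, inl (inr x) => to_mid b1 b2 x z
    | inr z, inr z' => z != z'
    end.

(* A Lambda-factor of (T, e): a spanning subgraph, given by its edge relation
   F (symmetric, contained in e), each of whose connected components is a path
   on 3 vertices u - c - w. *)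
Definition Lambda_factor (T : finType) (e : rel T) (F : rel T) : Prop :=
  symmetric F /\ subrel F e /\
  forall x : T, exists u c w : T,
    [/\ uniq [:: u; c; w],
        [set y | connect F x y] = [set u; c; w] &
        forall p q, p \in [set u; c; w] -> q \in [set u; c; w] ->
          F p q = same_edge p q u c || same_edge p q c w].

From mathcomp Require Import all_boot.
From mathcomp Require Import zify.

(* Every component of a Lambda-factor has 3 vertices.  The component of the
   middle edge z1 z2 contains at most one vertex of A, and every other
   component meeting A lies inside A, since in A a|b B the only edges leaving
   A go to z1 and z2.  Hence v(A) is 0 or 1 modulo 3, while v(A) = 2 mod 6. *)

Lemma dvdn_card_closed {T : finType} {F : rel T} {k : nat} {K : {set T}} :
  connect_sym F -> (forall x, #|[set y | connect F x y]| = k) ->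
  closed F K -> k %| #|K|.
Proof.
move=> symF card_comp.
move: {2}#|K| (leqnn #|K|) => n; elim: n K => [|n IHn] K cardK clK.
  by move: cardK; rewrite leqn0 => /eqP->.
have [->|[x xK]] := set_0Vmem K; first by rewrite cards0.
pose C := [set y | connect F x y].
have CK : C \subset K.
  by apply/subsetP => y; rewrite inE => /(closed_connect clK) <-.
have clKC : closed F (K :\: C).
  move=> p q Fpq; rewrite !inE (closed_connect clK (connect1 Fpq)).
  by rewrite (same_connect1r symF Fpq).
rewrite -(cardsID C K) (setIidPr CK) card_comp dvdn_addr ?IHn //.
have : 0 < #|C| by rewrite card_gt0; apply/set0Pn; exists x; rewrite inE.
by rewrite cardsDS //; lia.
Qed.

Lemma Lambda_factor_card_component {T : finType} {e F : rel T} (x : T) :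
  Lambda_factor e F -> #|[set y | connect F x y]| = 3.
Proof.
move=> [_ [_ /(_ x) [u [c [w [uniq_ucw -> _]]]]]].
move: uniq_ucw; rewrite /= !inE negb_or => /andP[/andP[uc uw] /andP[cw _]].
by rewrite -setUA cardsU1 cardsU1 cards1 !inE negb_or uc uw cw.
Qed.

Section SplitJoin.

Context {TA TB : finType} {eA : rel TA} {eB : rel TB} {a1 a2 : TA} {b1 b2 : TB}.

Let V := split_vertex TA TB.
Let z1 : V := inr false.
Let z2 : V := inr true.

Definition in_A (x : V) : bool := if x is inl (inl _) then true else false.

Lemma card_in_A : #|[set x | in_A x]| = #|TA|.
Proof.
have -> : [set x | in_A x] = [set inl (inl a) | a : TA].
  apply/setP => -[[a|b]|z]; rewrite inE /=; apply/esym.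
  - by apply/imsetP; exists a.
  - by apply/imsetP => -[].
  - by apply/imsetP => -[].
by rewrite card_imset ?cardT // => a a' [].
Qed.

Lemma split_join_from_A {x y : V} :
  split_join eA eB a1 a2 b1 b2 x y -> in_A x -> [|| in_A y, y == z1 | y == z2].
Proof. by case: x y => [[x|x]|zx] [[y|y]|[]]. Qed.

Context {F : rel V}.
Hypotheses (LF : Lambda_factor (split_join eA eB a1 a2 b1 b2) F) (Fz : F z1 z2).

Let symF : symmetric F := LF.1.
Let subF : subrel F (split_join eA eB a1 a2 b1 b2) := LF.2.1.
Let symcF : connect_sym F := sym_connect_sym symF.

Lemma closed_A_off_middle : closed F [set x | in_A x && ~~ connect F z1 x].
Proof.
have off_middle_in_A x y : F x y -> in_A x -> ~~ connect F z1 y -> in_A y.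
  move=> Fxy Ax.
  have /or3P[//|/eqP->|/eqP->] := split_join_from_A (subF _ _ Fxy) Ax.
  - by rewrite connect0.
  - by rewrite connect1.
move=> x y Fxy; rewrite !inE (same_connect1r symcF Fxy).
case: (boolP (connect F z1 y)) => z1y; rewrite ?andbF ?andbT //.
apply/idP/idP => [Ax|Ay]; first exact: off_middle_in_A Fxy Ax z1y.
apply: (off_middle_in_A y) Ay _; first by rewrite symF.
by rewrite (same_connect1r symcF Fxy).
Qed.

Lemma card_in_A_middle : #|[set x | in_A x && connect F z1 x]| <= 1.
Proof.
have mid_sub : [set z1; z2] \subset [set x | connect F z1 x].
  by apply/subsetP => x; rewrite !inE => /orP[]/eqP->; rewrite ?connect0 ?connect1.
have : [set x | in_A x && connect F z1 x]
         \subset [set x | connect F z1 x] :\: [set z1; z2].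
  by apply/subsetP => -[[x|x]|z]; rewrite !inE //= ?andbF.
move/subset_leq_card; rewrite cardsDS // cards2.
by rewrite (Lambda_factor_card_component z1 LF).
Qed.

Lemma Lambda_factor_through_middle_card_A : #|TA| %% 3 <= 1.
Proof.
have dvd3_off_middle : 3 %| #|[set x | in_A x && ~~ connect F z1 x]|.
  apply: (dvdn_card_closed symcF _ closed_A_off_middle) => x.
  exact: Lambda_factor_card_component LF.
have split_A : #|TA| = #|[set x | in_A x && connect F z1 x]|
                     + #|[set x | in_A x && ~~ connect F z1 x]|.
  rewrite -card_in_A -(cardsID [set x | connect F z1 x]).
  by congr (_ + _); apply: eq_card => x; rewrite !inE andbC.
have := card_in_A_middle; rewrite split_A; lia.
Qed.

End SplitJoin.

Theorem mainTheorem9 (TA TB : finType) (eA : rel TA) (eB : rel TB)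
  (a1 a2 : TA) (b1 b2 : TB) :
  simple_graph eA -> simple_graph eB -> cubic eA -> cubic eB ->
  #|TA| %% 6 = 2 -> #|TB| %% 6 = 2 ->
  eA a1 a2 -> eB b1 b2 ->
  #|{: split_vertex TA TB}| %% 6 = 0 /\
  ~ (exists F : rel (split_vertex TA TB),
       Lambda_factor (split_join eA eB a1 a2 b1 b2) F /\ F (inr false) (inr true)).
Proof.
move=> _ _ _ _ cardA cardB _ _.
split; first by rewrite !card_sum card_bool; lia.
move=> [F [LF Fz]].
have := Lambda_factor_through_middle_card_A LF Fz; lia.
Qed.
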